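(* Let $p,q$ be fixed distinct propositional letters (only $p$ is used). Define $p^0:=p$ and $p^{n+1}:=p\to p^n$, and for $T\subseteq\omega$ let $K_T=\{p\looparrowright p^k:k\in T\}$. Then: (i) for every non-empty $T\subseteq\omega\setminus\{0\}$, the logic $\mathcal{F}K_T$ is Epstein complete; more precisely, $\mathcal{F}K_T=\{\varphi\in\mathsf{FOR}:\mathfrak{R}\vDash\varphi\text{ for all }\mathfrak{R}\in\mathsf{R}^T\}$, where $\mathfrak{R}^T_0=\{\langle\sigma(p),\sigma(p^k)\rangle:\sigma\text{ a substitution},\ k\in T\}$ and $\mathsf{R}^T=\{\mathfrak{R}\subseteq\mathsf{FOR}^2:\mathfrak{R}^T_0\subseteq\mathfrak{R}\}$; (ii) for non-empty $T,V\subseteq\omega\setminus\{0\}$ with $T\neq V$ we have $\mathcal{F}K_T\neq\mathcal{F}K_V$. Consequently there are exactly $2^{\aleph_0}$ Epstein complete logics (extensions of $\mathcal{F}$).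
   Context: Language: propositional letters $\Phi=\{p_0,p_1,\dots\}$; connectives $\neg$ (unary), $\lor,\wedge,\to,\leftrightarrow,\vartriangle,\looparrowright$ (binary); $\mathsf{FOR}$ the set of all formulas. A substitution is an endomorphism of the free formula algebra (determined by an arbitrary map $\Phi\to\mathsf{FOR}$). An Epstein model is $\langle v,\mathfrak{R}\rangle$ with $v:\Phi\to\{0,1\}$ and $\mathfrak{R}\subseteq\mathsf{FOR}^2$; truth: letters via $v$, boolean connectives classical, $\langle v,\mathfrak{R}\rangle\vDash\varphi\vartriangle\psi$ iff both $\varphi,\psi$ true and $\langle\varphi,\psi\rangle\in\mathfrak{R}$, $\langle v,\mathfrak{R}\rangle\vDash\varphi\looparrowright\psi$ iff $\varphi\to\psi$ true and $\langle\varphi,\psi\rangle\in\mathfrak{R}$. $\mathfrak{R}\vDash\varphi$ iff $\langle v,\mathfrak{R}\rangle\vDash\varphi$ for every valuation $v$. $\mathcal{F}$ is the least set of formulas containing all classical tautologies of this language (substitution instances of propositional tautologies) and the axioms $(p\looparrowright q)\to(p\to q)$ and $(p\vartriangle q)\leftrightarrow((p\looparrowright q)\wedge(p\wedge q))$, closed under uniform substitution and modus ponens; $\mathcal{F}$ coincides with the set of formulas true in all Epstein models. For $\Lambda\subseteq\mathsf{FOR}$, $\mathcal{F}\Lambda$ is the least set containing $\mathcal{F}\cup\Lambda$ closed under uniform substitution and modus ponens. A logic is a set of formulas containing $\mathcal{F}$ closed under uniform substitution and modus ponens. A logic $\lambda$ is Epstein complete iff there is a set $X$ of Epstein relations with $\lambda=\{\varphi:\mathfrak{R}\vDash\varphi\text{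 for all }\mathfrak{R}\in X\}$; otherwise Epstein incomplete. *)

From Stdlib Require Import Bool.

Inductive FOR : Type :=
| Var : nat -> FOR
| Neg : FOR -> FOR
| Or  : FOR -> FOR -> FOR
| And : FOR -> FOR -> FOR
| Imp : FOR -> FOR -> FOR
| Iff : FOR -> FOR -> FOR
| RAnd : FOR -> FOR -> FOR
| RImp : FOR -> FOR -> FOR.

Fixpoint subst (s : nat -> FOR) (f : FOR) : FOR :=
  match f with
  | Var i => s i
  | Neg a => Neg (subst s a)
  | Or a b => Or (subst s a) (subst s b)
  | And a b => And (subst s a) (subst s b)
  | Imp a b => Imp (subst s a) (subst s b)
  | Iff a b => Iff (subst s a) (subst s b)
  | RAnd a b => RAnd (subst s a) (subst s b)
  | RImp a b => RImp (subst s a) (subst s b)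
  end.

Fixpoint boolean (f : FOR) : Prop :=
  match f with
  | Var _ => True
  | Neg a => boolean a
  | Or a b | And a b | Imp a b | Iff a b => boolean a /\ boolean b
  | RAnd _ _ | RImp _ _ => False
  end.

Fixpoint sat (v : nat -> bool) (R : FOR -> FOR -> Prop) (f : FOR) : Prop :=
  match f with
  | Var i => v i = true
  | Neg a => ~ sat v R a
  | Or a b => sat v R a \/ sat v R b
  | And a b => sat v R a /\ sat v R b
  | Imp a b => sat v R a -> sat v R b
  | Iff a b => sat v R a <-> sat v R b
  | RAnd a b => sat v R a /\ sat v R b /\ R a b
  | RImp a b => (sat v R a -> sat v R b) /\ R a b
  end.

Definition valid (R : FOR -> FOR -> Prop) (f : FOR) : Prop :=
  forall v : nat -> bool, sat v R f.

(* propositional tautology: boolean formula true under every valuation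
   (on boolean formulas the relation plays no role) *)
Definition prop_taut (f : FOR) : Prop :=
  boolean f /\ forall v : nat -> bool, sat v (fun _ _ => False) f.

Definition taut (f : FOR) : Prop :=
  exists (g : FOR) (s : nat -> FOR), prop_taut g /\ f = subst s g.

Definition p : FOR := Var 0.
Definition q : FOR := Var 1.

Inductive FL (Lam : FOR -> Prop) : FOR -> Prop :=
| FL_taut : forall f, taut f -> FL Lam f
| FL_ax1 : FL Lam (Imp (RImp p q) (Imp p q))
| FL_ax2 : FL Lam (Iff (RAnd p q) (And (RImp p q) (And p q)))
| FL_hyp : forall f, Lam f -> FL Lam f
| FL_subst : forall s f, FL Lam f -> FL Lam (subst s f)
| FL_mp : forall f g, FL Lam f -> FL Lam (Imp f g) -> FL Lam g.

Definition Fcal : FOR -> Prop := FL (fun _ => False).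

Definition is_logic (L : FOR -> Prop) : Prop :=
  (forall f, Fcal f -> L f) /\
  (forall s f, L f -> L (subst s f)) /\
  (forall f g, L f -> L (Imp f g) -> L g).

Definition same_set (A B : FOR -> Prop) : Prop := forall f, A f <-> B f.

Definition epstein_complete (L : FOR -> Prop) : Prop :=
  is_logic L /\
  exists X : (FOR -> FOR -> Prop) -> Prop,
    same_set L (fun f => forall R, X R -> valid R f).

Fixpoint ppow (n : nat) : FOR :=
  match n with
  | O => p
  | S m => Imp p (ppow m)
  end.

Definition K (T : nat -> Prop) : FOR -> Prop :=
  fun f => exists k, T k /\ f = RImp p (ppow k).

Definition R0 (T : nat -> Prop) : FOR -> FOR -> Prop :=
  fun a b => exists (s : nat -> FOR) k, T k /\ a = subst s p /\ b = subst s (ppow k).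

Definition RT (T : nat -> Prop) : (FOR -> FOR -> Prop) -> Prop :=
  fun R => forall a b, R0 T a b -> R a b.

Definition admissible (T : nat -> Prop) : Prop :=
  (exists k, T k) /\ (forall k, T k -> k <> 0).

(* Soundness: R^T_0 is closed under substitution, and p ↬ p^k holds in every
   relation containing R^T_0 because p entails p^k.

   Completeness: read a formula f as a propositional formula (its skeleton) whose
   atoms are the letters and the relating subformulas of f.  Each relating
   subformula contributes finitely many derivable constraints: the instance of the
   relevant axiom of F, and ψ ↬ χ itself when <ψ, χ> ∈ R^T_0.  A valuation of the
   skeleton satisfying all constraints induces an Epstein model with relation
   containing R^T_0 that agrees with it on f, so "constraints → f" is a
   tautology and f is derivable by modus ponens.

   Distinctness: <p, p^k> ∈ R^T_0 forces k ∈ T, since σ(p) = p gives σ(p^j) = p^j.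
   Counting: T ↦ F K_T is injective on subsets of ω, and a logic is determined by
   its characteristic function along an injective numbering of formulas. *)

From Stdlib Require Import Bool List Classical ClassicalEpsilon FunctionalExtensionality.
From Stdlib Require Cantor.
Import ListNotations.

Definition no_rel : FOR -> FOR -> Prop := fun _ _ => False.

Definition truth (v : nat -> bool) (R : FOR -> FOR -> Prop) (f : FOR) : bool :=
  if excluded_middle_informative (sat v R f) then true else false.

Lemma truth_true v R f : truth v R f = true <-> sat v R f.
Proof.
  unfold truth; destruct (excluded_middle_informative (sat v R f)); split;
    congruence || tauto.
Qed.

Lemma sat_subst s v R f :
  sat v R (subst s f) <->
  sat (fun i => truth v R (s i)) (fun a b => R (subst s a) (subst s b)) f.
Proof.
  induction f; simpl;
    try rewrite IHf; try rewrite IHf1, IHf2; try rewrite truth_true; tauto.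
Qed.

Lemma sat_boolean_rel_irrelevant v R R' f :
  boolean f -> (sat v R f <-> sat v R' f).
Proof.
  induction f; simpl; intro Hf; try tauto;
    try rewrite (IHf Hf); try (destruct Hf as [H1 H2]; rewrite (IHf1 H1), (IHf2 H2)); tauto.
Qed.

Lemma subst_subst s s' f : subst s (subst s' f) = subst (fun i => subst s (s' i)) f.
Proof. induction f; simpl; congruence. Qed.

Lemma subst_Var f : subst Var f = f.
Proof. induction f; simpl; congruence. Qed.

Lemma sat_ppow v R k : sat v R p -> sat v R (ppow k).
Proof. induction k; simpl; auto. Qed.

Lemma R0_subst T s a b : R0 T a b -> R0 T (subst s a) (subst s b).
Proof.
  intros [s' [k [Hk [-> ->]]]].
  exists (fun i => subst s (s' i)), k; rewrite !subst_subst; auto.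
Qed.

Lemma FL_K_sound T f : FL (K T) f -> forall R, RT T R -> valid R f.
Proof.
  induction 1 as [f [g [s [[Hg Hgv] ->]]]| | |f [k [Hk ->]]|s f _ IH|f g _ IHf _ IHfg];
    intros R HR v; simpl.
  - apply sat_subst, (sat_boolean_rel_irrelevant _ _ no_rel); auto.
  - tauto.
  - tauto.
  - split; [apply sat_ppow|].
    apply HR; exists Var, k; rewrite !subst_Var; auto.
  - apply sat_subst, IH; intros a b Hab; apply HR, R0_subst, Hab.
  - exact (IHfg R HR v (IHf R HR v)).
Qed.

Arguments Cantor.to_nat : simpl never.

Fixpoint enc (f : FOR) : nat :=
  match f with
  | Var i => Cantor.to_nat (0, i)
  | Neg a => Cantor.to_nat (1, enc a)
  | Or a b => Cantor.to_nat (2, Cantor.to_nat (enc a, enc b))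
  | And a b => Cantor.to_nat (3, Cantor.to_nat (enc a, enc b))
  | Imp a b => Cantor.to_nat (4, Cantor.to_nat (enc a, enc b))
  | Iff a b => Cantor.to_nat (5, Cantor.to_nat (enc a, enc b))
  | RAnd a b => Cantor.to_nat (6, Cantor.to_nat (enc a, enc b))
  | RImp a b => Cantor.to_nat (7, Cantor.to_nat (enc a, enc b))
  end.

Lemma Cantor_to_nat_inj x y : Cantor.to_nat x = Cantor.to_nat y -> x = y.
Proof.
  intro E; rewrite <- (Cantor.cancel_of_to x), <- (Cantor.cancel_of_to y), E; auto.
Qed.

Lemma enc_inj f g : enc f = enc g -> f = g.
Proof.
  revert g; induction f; destruct g; simpl; intro E; apply Cantor_to_nat_inj in E;
    try discriminate; injection E; intros;
    try (apply Cantor_to_nat_inj in H; injection H; intros);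
    f_equal; auto.
Qed.

Definition decode (n : nat) : FOR :=
  match excluded_middle_informative (exists f, enc f = n) with
  | left H => proj1_sig (constructive_indefinite_description _ H)
  | right _ => p
  end.

Lemma decode_enc f : decode (enc f) = f.
Proof.
  unfold decode; destruct (excluded_middle_informative (exists g, enc g = enc f))
    as [H|H]; [|exfalso; eauto].
  destruct (constructive_indefinite_description _ H) as [g Hg]; apply enc_inj, Hg.
Qed.

(* Letters and relating subformulas become propositional letters indexed by their codes. *)
Fixpoint skel (g : FOR) : FOR :=
  match g with
  | Var _ | RAnd _ _ | RImp _ _ => Var (enc g)
  | Neg a => Neg (skel a)
  | Or a b => Or (skel a) (skel b)
  | And a b => And (skel a) (skel b)
  | Imp a b => Imp (skel a) (skel b)
  | Iff a b => Iff (skel a) (skel b)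
  end.

Lemma skel_boolean g : boolean (skel g).
Proof. induction g; simpl; auto. Qed.

Lemma subst_decode_skel g : subst decode (skel g) = g.
Proof. induction g; cbn [skel subst]; rewrite ?decode_enc; congruence. Qed.

(* The atoms of the skeleton of g; that of ψ ▵ χ includes ψ ↬ χ, whose truth it
   depends on through the second axiom of F. *)
Fixpoint atoms (g : FOR) : list FOR :=
  match g with
  | Var _ => [g]
  | Neg a => atoms a
  | Or a b | And a b | Imp a b | Iff a b => atoms a ++ atoms b
  | RAnd a b => g :: RImp a b :: atoms a ++ atoms b
  | RImp a b => g :: atoms a ++ atoms b
  end.

Definition subst2 (x y : FOR) (i : nat) : FOR :=
  match i with 0 => x | 1 => y | _ => Var i end.

Definition constraints (T : nat -> Prop) (a : FOR) : list FOR :=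
  match a with
  | RAnd x y => [Iff (RAnd x y) (And (RImp x y) (And x y))]
  | RImp x y =>
      Imp (RImp x y) (Imp x y) ::
      if excluded_middle_informative (R0 T x y) then [RImp x y] else []
  | _ => []
  end.

Lemma constraints_derivable T a c : In c (constraints T a) -> FL (K T) c.
Proof.
  destruct a as [| | | | | |x y|x y]; simpl; try contradiction.
  - intros [<-|[]]; exact (FL_subst _ (subst2 x y) _ (FL_ax2 _)).
  - intros [<-|Hc]; [exact (FL_subst _ (subst2 x y) _ (FL_ax1 _))|].
    destruct (excluded_middle_informative (R0 T x y)) as [[s [k [Hk [-> ->]]]]|_];
      [destruct Hc as [<-|[]]|contradiction].
    apply (FL_subst _ s (RImp p (ppow k))), FL_hyp; exists k; auto.
Qed.

Section Model.

Variable T : nat -> Prop.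
Variable w : nat -> bool.

Definition skel_sat (g : FOR) : Prop := sat w no_rel (skel g).

Definition model_val (i : nat) : bool := w (enc (Var i)).

Definition model_rel (x y : FOR) : Prop := w (enc (RImp x y)) = true \/ R0 T x y.

Lemma model_rel_RT : RT T model_rel.
Proof. intros x y H; right; exact H. Qed.

Definition respects_constraints (g : FOR) : Prop :=
  forall a c, In a (atoms g) -> In c (constraints T a) -> skel_sat c.

Lemma model_rel_iff x y :
  (forall c, In c (constraints T (RImp x y)) -> skel_sat c) ->
  (model_rel x y <-> w (enc (RImp x y)) = true).
Proof.
  intro Hc; unfold model_rel; split; [|auto].
  intros [H|HR]; [exact H|].
  apply (Hc (RImp x y)); simpl.
  destruct (excluded_middle_informative (R0 T x y)); [simpl; auto|contradiction].
Qed.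

Lemma sat_model g : respects_constraints g -> (sat model_val model_rel g <-> skel_sat g).
Proof.
  unfold skel_sat; induction g as [i| |g1 IH1 g2 IH2|g1 IH1 g2 IH2|g1 IH1 g2 IH2
                                   |g1 IH1 g2 IH2|x IHx y IHy|x IHx y IHy];
    cbn [sat skel]; intro Hg;
    try rewrite IHg; try rewrite IH1, IH2; try rewrite IHx, IHy; try tauto;
    try (intros a c Ha; apply Hg; cbn [atoms In]; rewrite ?in_app_iff; tauto).
  - rewrite model_rel_iff by (intros c; apply (Hg (RImp x y)); simpl; auto).
    pose proof (Hg (RAnd x y) _ (or_introl eq_refl) (or_introl eq_refl)) as H.
    unfold skel_sat in H; cbn [sat skel] in H; tauto.
  - rewrite model_rel_iff by (intros c; apply (Hg (RImp x y)); simpl; auto).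
    pose proof (Hg (RImp x y) _ (or_introl eq_refl) (or_introl eq_refl)) as H.
    unfold skel_sat in H; cbn [sat skel] in H; tauto.
Qed.

End Model.

Fixpoint imps (hs : list FOR) (f : FOR) : FOR :=
  match hs with
  | [] => f
  | h :: hs' => Imp h (imps hs' f)
  end.

Lemma FL_imps_mp Lam hs f :
  (forall h, In h hs -> FL Lam h) -> FL Lam (imps hs f) -> FL Lam f.
Proof.
  induction hs as [|h hs IH]; simpl; intros Hhs Himp; auto.
  apply IH; [auto|]; exact (FL_mp _ _ _ (Hhs h (or_introl eq_refl)) Himp).
Qed.

Lemma sat_skel_imps v R hs f :
  ((forall h, In h hs -> sat v R (skel h)) -> sat v R (skel f)) ->
  sat v R (skel (imps hs f)).
Proof.
  induction hs as [|h hs IH]; simpl; intro Hf.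
  - apply Hf; contradiction.
  - intro Hh; apply IH; intro Hhs; apply Hf; intros h' [<-|Hh']; auto.
Qed.

Lemma FL_K_complete T f : (forall R, RT T R -> valid R f) -> FL (K T) f.
Proof.
  intro Hf.
  set (hs := flat_map (constraints T) (atoms f)).
  apply (FL_imps_mp _ hs).
  { intros h Hh; apply in_flat_map in Hh as [a [_ Hh]].
    exact (constraints_derivable T a h Hh). }
  apply FL_taut; exists (skel (imps hs f)), decode; split; [split|].
  - apply skel_boolean.
  - intro w; apply sat_skel_imps; intro Hhs.
    apply (sat_model T w f); [|apply Hf, model_rel_RT].
    intros a c Ha Hc; apply Hhs, in_flat_map; eauto.
  - symmetry; apply subst_decode_skel.
Qed.

Lemma FL_K_sound_complete T :
  same_set (FL (K T)) (fun f => forall R, RT T R -> valid R f).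
Proof. intro f; split; [apply FL_K_sound|apply FL_K_complete]. Qed.

Lemma FL_mono (Lam Lam' : FOR -> Prop) f :
  (forall g, Lam g -> Lam' g) -> FL Lam f -> FL Lam' f.
Proof.
  intros HL; induction 1.
  all: eauto using FL.
Qed.

Lemma FL_is_logic Lam : is_logic (FL Lam).
Proof.
  split; [|split].
  - intros f; apply FL_mono; contradiction.
  - apply FL_subst.
  - apply FL_mp.
Qed.

Lemma epstein_complete_FL_K T : epstein_complete (FL (K T)).
Proof. split; [apply FL_is_logic|exists (RT T); apply FL_K_sound_complete]. Qed.

Lemma subst_ppow s k : s 0 = p -> subst s (ppow k) = ppow k.
Proof. intro Hs; induction k; simpl; [exact Hs|congruence]. Qed.

Lemma ppow_inj j k : ppow j = ppow k -> j = k.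
Proof.
  revert k; induction j; destruct k; simpl; intro E; try discriminate; auto.
  injection E; auto.
Qed.

Lemma FL_K_RImp_ppow T k : FL (K T) (RImp p (ppow k)) <-> T k.
Proof.
  split; [|intro Hk; apply FL_hyp; exists k; auto].
  intro H; destruct (FL_K_sound T _ H (R0 T) (fun _ _ H => H) (fun _ => true))
    as [_ [s [j [Hj [Hs Hk]]]]].
  rewrite subst_ppow in Hk by (symmetry; exact Hs).
  apply ppow_inj in Hk; subst; exact Hj.
Qed.

Lemma FL_K_inj T V : same_set (FL (K T)) (FL (K V)) -> forall k, T k <-> V k.
Proof. intros HTV k; rewrite <- !FL_K_RImp_ppow; apply HTV. Qed.

Definition char_code (L : FOR -> Prop) (n : nat) : bool :=
  if excluded_middle_informative (L (decode n)) then true else false.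

Lemma char_code_inj L L' : char_code L = char_code L' -> same_set L L'.
Proof.
  intros E f; pose proof (f_equal (fun c => c (enc f)) E) as Ef; simpl in Ef.
  unfold char_code in Ef; rewrite decode_enc in Ef.
  destruct (excluded_middle_informative (L f));
    destruct (excluded_middle_informative (L' f)); tauto || discriminate.
Qed.

Theorem mainTheorem3 :
  (* (i) *)
  (forall T : nat -> Prop, admissible T ->
     epstein_complete (FL (K T)) /\
     same_set (FL (K T)) (fun f => forall R, RT T R -> valid R f)) /\
  (* (ii) *)
  (forall T V : nat -> Prop, admissible T -> admissible V ->
     ~ (forall k, T k <-> V k) ->
     ~ same_set (FL (K T)) (FL (K V))) /\
  (* exactly 2^aleph_0 Epstein complete logics: an injection from Cantor
     space into them and an injection from them into Cantor space
     (sets of formulas taken up to extensional equality) *)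
  (exists F : (nat -> bool) -> (FOR -> Prop),
     (forall b, epstein_complete (F b)) /\
     (forall b b', same_set (F b) (F b') -> b = b')) /\
  (exists G : (FOR -> Prop) -> (nat -> bool),
     forall L L', epstein_complete L -> epstein_complete L' ->
       G L = G L' -> same_set L L').
Proof.
  split; [|split; [|split]].
  - intros T _; split; [apply epstein_complete_FL_K|apply FL_K_sound_complete].
  - intros T V _ _ HTV HS; exact (HTV (FL_K_inj T V HS)).
  - exists (fun b => FL (K (fun k => b k = true))); split.
    + intro b; apply epstein_complete_FL_K.
    + intros b b' HS; apply functional_extensionality; intro k.
      apply eq_true_iff_eq, (FL_K_inj _ _ HS).
  - exists char_code; intros L L' _ _; apply char_code_inj.
Qed.
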